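(* If a set of reals $X$ satisfies $\binom{\Omega}{\mathrm T^*}$, then for every $k\ge1$ the power $X^k$ satisfies $\binom{\Omega}{\mathrm T^*}$.
   Context: A set of reals is an infinite topological space homeomorphic to a subset of $\mathbb R$. A cover of a space $X$ is a family $\mathcal U$ of subsets of $X$ with $\bigcup\mathcal U=X$ such that $X\not\subseteq U$ for all $U\in\mathcal U$; it is an $\omega$-cover if every finite subset of $X$ is contained in some member. For a countable cover $\mathcal U=\{U_n\}_{n\in a}$ ($a\subseteq\mathbb N$, enumeration bijective) define $h_{\mathcal U}:X\to P(\mathbb N)$ by $h_{\mathcal U}(x)=\{n\in a: x\in U_n\}$. For $a,b\subseteq\mathbb N$, $a\subseteq^* b$ means $a\setminus b$ is finite. A family $Y$ of infinite subsets of $\mathbb N$ is linearly refinable if for each $y\in Y$ there is an infinite $\hat y\subseteq y$ such that $\{\hat y: y\in Y\}$ is linearly ordered by $\subseteq^*$. A countable cover $\mathcal U$ of $X$ is a $\tau^*$-cover if $h_{\mathcal U}[X]$ consists of infinite sets and is linearly refinable. $\Omega$ denotes the collection of open $\omega$-covers of the space, and $\mathrm T^*$ the collection of countable open $\tau^*$-covers. A space satisfies $\binom{\mathfrak U}{\mathfrak V}$ if every $\mathcal U\in\mathfrak U$ has a subfamily belonging to $\mathfrak V$. *)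

From HB Require Import structures.
From mathcomp Require Import all_boot all_order all_algebra.
From mathcomp Require Import all_classical all_reals all_analysis.
Set Implicit Arguments. Unset Strict Implicit. Unset Printing Implicit Defensive.
Import Order.TTheory GRing.Theory Num.Theory.
Import numFieldNormedType.Exports.
Local Open Scope classical_set_scope.

Section Covers.
Variable T : topologicalType.

Definition relopen (A U : set T) : Prop := exists O : set T, open O /\ U = O `&` A.

Definition is_cover (A : set T) (F : set (set T)) : Prop :=
  [/\ (forall U, F U -> U `<=` A),
      A `<=` \bigcup_(U in F) U &
      (forall U, F U -> ~ (A `<=` U))].

Definition open_family (A : set T) (F : set (set T)) : Prop :=
  forall U, F U -> relopen A U.

Definition omega_cover (A : set T) (F : set (set T)) : Prop :=
  is_cover A F /\
  (forall S : set T, finite_set S -> S `<=` A -> exists U, F U /\ S `<=` U).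

Definition Omega (A : set T) (F : set (set T)) : Prop :=
  open_family A F /\ omega_cover A F.

Definition hcov (a : set nat) (e : nat -> set T) (x : T) : set nat :=
  [set n | a n /\ e n x].

End Covers.

Definition subset_star (a b : set nat) : Prop := finite_set (a `\` b).

Definition linearly_refinable (Y : set (set nat)) : Prop :=
  exists r : set nat -> set nat,
    (forall y, Y y -> r y `<=` y /\ infinite_set (r y)) /\
    (forall y1 y2, Y y1 -> Y y2 ->
        subset_star (r y1) (r y2) \/ subset_star (r y2) (r y1)).

Section TauStar.
Variable T : topologicalType.

Definition tau_star_cover (A : set T) (F : set (set T)) : Prop :=
  is_cover A F /\
  exists (a : set nat) (e : nat -> set T),
    [/\ (forall n, a n -> F (e n)),
        (forall m n, a m -> a n -> e m = e n -> m = n),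
        (forall U, F U -> exists2 n, a n & e n = U),
        (forall x, A x -> infinite_set (hcov a e x)) &
        linearly_refinable (hcov a e @` A)].

Definition Tstar (A : set T) (F : set (set T)) : Prop :=
  open_family A F /\ tau_star_cover A F.

Definition sel_Omega_Tstar (A : set T) : Prop :=
  forall F, Omega A F -> exists G, G `<=` F /\ Tstar A G.

End TauStar.

(* X^k as a subspace of R^k = 'rV[R]_k (product topology) *)
Definition power_set_rV (R : realType) (X : set R) (k : nat) : set 'rV[R]_k :=
  [set v | forall i : 'I_k, X (v ord0 i)].
Arguments power_set_rV {R} X k.
Arguments sel_Omega_Tstar {T} A.

From HB Require Import structures.
From mathcomp Require Import all_boot all_order all_algebra.
From mathcomp Require Import all_classical all_reals all_analysis.
From mathcomp Require Import finmap.
Set Implicit Arguments. Unset Strict Implicit. Unset Printing Implicit Defensive.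
Import numFieldNormedType.Exports.
Local Open Scope classical_set_scope.

(* Let F be an open omega-cover of X^k. The open V of X such that V^k lies in
   a member of F form an omega-cover of X: a finite S^k inside an open set of
   R^k stays inside it after thickening S by a small ball (tube lemma). Select
   from them a tau^*-cover (V_n), with linear refinement q, and choose U_n in F
   containing V_n^k. For x in X^k, the intersection of the q's of the
   coordinates of x consists of indices n with x in V_n^k, and is ⊆*-equal to
   the q of a ⊆*-least coordinate. These intersections are thus infinite and
   ⊆*-linearly ordered, which makes (U_n) a tau^*-cover of X^k. *)

Definition subset_star_linear {T : Type} (P : set T) (q : T -> set nat) : Prop :=
  forall t1 t2, P t1 -> P t2 -> subset_star (q t1) (q t2) \/ subset_star (q t2) (q t1).

Lemma subset_subset_star (a b : set nat) : a `<=` b -> subset_star a b.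
Proof. by move=> ab; rewrite /subset_star (_ : a `\` b = set0)// -subset0 => x [/ab]. Qed.

Lemma subset_star_trans (a b c : set nat) :
  subset_star a b -> subset_star b c -> subset_star a c.
Proof.
move=> fab fbc; apply: sub_finite_set (a `\` b `|` b `\` c) _ _; last by rewrite finite_setU.
by move=> x [ax ncx]; have [bx|nbx] := pselect (b x); [right|left].
Qed.

Lemma subset_star_image (f : nat -> nat) (a b : set nat) :
  subset_star a b -> subset_star (f @` a) (f @` b).
Proof.
move=> fab; apply: sub_finite_set (f @` (a `\` b)) _ (finite_image _ fab).
by move=> _ [[x ax <-] nfb]; exists x => //; split => // bx; apply: nfb; exists x.
Qed.

Lemma subset_star_infinite (a b : set nat) :
  subset_star a b -> infinite_set a -> infinite_set b.
Proof.
move=> fab ainf finb; apply: ainf; apply: sub_finite_set (a `\` b `|` b) _ _.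
  by move=> x ax; have [bx|nbx] := pselect (b x); [right|left].
by rewrite finite_setU.
Qed.

Lemma subset_star_bigcap (T : eqType) (a : set nat) (q : T -> set nat) (s : seq T) :
  (forall t, t \in s -> subset_star a (q t)) ->
  subset_star a (\bigcap_(t in [set` s]) q t).
Proof.
move=> aq; apply: sub_finite_set (\bigcup_(t in [set` s]) (a `\` q t)) _ _.
  by move=> n [an /existsNP [t /not_implyP [st ntn]]]; exists t.
exact: bigcup_finite (finite_seq s) aq.
Qed.

Section LinearFamily.
Variables (T : eqType) (P : set T) (q : T -> set nat).
Hypothesis q_linear : subset_star_linear P q.

Lemma subset_star_seq_min (s : seq T) : s != [::] -> (forall t, t \in s -> P t) ->
  exists2 t0, t0 \in s & forall t, t \in s -> subset_star (q t0) (q t).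
Proof.
elim: s => [//|t1 [|t2 s] IH] _ Ps.
  by exists t1; rewrite ?mem_head// => t; rewrite mem_seq1 => /eqP->; apply: subset_subset_star.
have [t0 t0s min_t0] : exists2 t0, t0 \in t2 :: s &
    forall t, t \in t2 :: s -> subset_star (q t0) (q t).
  by apply: IH => // t ts; apply: Ps; rewrite in_cons ts orbT.
have P1 : P t1 by apply: Ps; rewrite mem_head.
have P0 : P t0 by apply: Ps; rewrite in_cons t0s orbT.
case: (q_linear P1 P0) => [q10|q01].
  exists t1; rewrite ?mem_head// => t; rewrite in_cons => /orP[/eqP->|ts].
    exact: subset_subset_star.
  exact: subset_star_trans q10 (min_t0 _ ts).
exists t0; first by rewrite in_cons t0s orbT.
by move=> t; rewrite in_cons => /orP[/eqP->|]; last exact: min_t0.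
Qed.

Lemma bigcap_seq_subset_star_min (s : seq T) :
  s != [::] -> (forall t, t \in s -> P t) ->
  exists2 t0, t0 \in s & subset_star (q t0) (\bigcap_(t in [set` s]) q t).
Proof.
move=> s0 Ps; have [t0 t0s min_t0] := subset_star_seq_min s0 Ps.
by exists t0 => //; apply: subset_star_bigcap.
Qed.

Lemma bigcap_seq_linear :
  subset_star_linear [set s | s != [::] /\ forall t, t \in s -> P t]
    (fun s => \bigcap_(t in [set` s]) q t).
Proof.
move=> s1 s2 [s10 Ps1] [s20 Ps2].
have [t1 t1s min1] := bigcap_seq_subset_star_min s10 Ps1.
have [t2 t2s min2] := bigcap_seq_subset_star_min s20 Ps2.
have meet_sub t (s : seq T) : t \in s -> subset_star (\bigcap_(t in [set` s]) q t) (q t).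
  by move=> ts; apply: subset_subset_star => n; apply.
case: (q_linear (Ps1 _ t1s) (Ps2 _ t2s)) => q12; [left|right].
  exact: subset_star_trans (meet_sub _ _ t1s) (subset_star_trans q12 min2).
exact: subset_star_trans (meet_sub _ _ t2s) (subset_star_trans q12 min1).
Qed.

Lemma bigcap_seq_infinite (s : seq T) :
  (forall t, P t -> infinite_set (q t)) ->
  s != [::] -> (forall t, t \in s -> P t) -> infinite_set (\bigcap_(t in [set` s]) q t).
Proof.
move=> q_inf s0 Ps; have [t0 t0s min_t0] := bigcap_seq_subset_star_min s0 Ps.
exact: subset_star_infinite min_t0 (q_inf _ (Ps _ t0s)).
Qed.

End LinearFamily.

Lemma linearly_refinable_image (T : Type) (A : set T) (g r : T -> set nat) :
  (forall x, A x -> r x `<=` g x) -> (forall x, A x -> infinite_set (r x)) ->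
  subset_star_linear A r -> linearly_refinable (g @` A).
Proof.
move=> rg r_inf r_linear.
have [[x0 Ax0]|A0] := pselect (A !=set0); last first.
  by exists id; split=> [y|y1 y2] [x Ax]; case: A0; exists x.
have /choice [pre preP] : forall y, exists x, (g @` A) y -> A x /\ g x = y.
  move=> y; have [[x Ax <-]|nAy] := pselect ((g @` A) y); first by exists x.
  by exists x0 => /nAy.
exists (r \o pre); split.
  move=> y /preP [Ax gy] /=; split; last exact: r_inf.
  by rewrite -[X in _ `<=` X]gy; exact: rg.
by move=> y1 y2 /preP [A1 _] /preP [A2 _]; exact: r_linear.
Qed.

Lemma first_occurrence_reindex (T : Type) (a : set nat) (c : nat -> T) :
  exists a' : set nat, exists rho : nat -> nat,
    [/\ a' `<=` a, (forall m n, a' m -> a' n -> c m = c n -> m = n) &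
        forall n, a n -> a' (rho n) /\ c (rho n) = c n].
Proof.
pose a' := [set n | a n /\ forall m, a m -> (m < n)%N -> c m <> c n].
have first_rep n : a n -> exists m, a' m /\ c m = c n.
  elim/ltn_ind: n => n IH an.
  have [n_first|] := pselect (forall m, a m -> (m < n)%N -> c m <> c n).
    by exists n.
  move=> /existsNP [m /not_implyP [am /not_implyP [mn /contrapT cmn]]].
  by have [m' [a'm' cm']] := IH m mn am; exists m'; rewrite cm'.
have /choice [rho rhoP] : forall n, exists m, a n -> a' m /\ c m = c n.
  move=> n; have [an|nan] := pselect (a n); last by exists 0%N => /nan.
  by have [m ?] := first_rep n an; exists m.
exists a', rho; split => //; first by move=> n [].
move=> m n [am m_first] [an n_first] cmn.
case: (ltngtP m n) => // [mn|nm]; first by have := n_first m am mn cmn.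
by have := m_first n an nm (esym cmn).
Qed.

Section PowerSets.
Variables (R : realType) (k : nat).

Lemma power_set_rV_subset (S S' : set R) :
  S `<=` S' -> power_set_rV S k `<=` power_set_rV S' k.
Proof. by move=> SS' v Sv i; apply: SS'. Qed.

Lemma finite_power_set_rV (S : set R) : finite_set S -> finite_set (power_set_rV S k).
Proof.
move=> /finite_seqP [s ->].
pose vec (f : {ffun 'I_k -> seq_sub s}) : 'rV[R]_k := (\row_i ssval (f i))%R.
apply: sub_finite_set (vec @` setT) _ (finite_image _ _); last exact: finite_finset.
move=> w sw; exists [ffun i => SeqSub (sw i)] => //.
by apply/rowP => i; rewrite mxE ffunE.
Qed.

Lemma open_power_set_rV_thicken (S : set R) (O : set 'rV[R]_k) :
  finite_set S -> open O -> power_set_rV S k `<=` O ->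
  exists2 d : R, (0 < d)%R & power_set_rV (\bigcup_(s in S) ball s d) k `<=` O.
Proof.
move=> finS O_open SO; have finP := finite_power_set_rV finS.
have near_ball : \forall d \near (0%R : R)^'+,
    forall v, power_set_rV S k v -> ball v d `<=` O.
  have : \forall d \near (0%R : R)^'+,
      (\bigcap_(v in [set` fset_set (power_set_rV S k)]) [set d | ball v d `<=` O]) d.
    apply: filter_bigI => v; rewrite in_fset_set // => /set_mem Sv.
    rewrite openE in O_open; have /nbhs_ballP [e e0 eO] := O_open _ (SO _ Sv).
    apply: filterS (nbhs_right_lt e0) => d de.
    exact: subset_trans (le_ball (Order.POrderTheory.ltW de)) eO.
  by apply: filterS => d dO v Sv; apply: dO; rewrite /= in_fset_set //; apply: mem_set.
have [d [d0 dO]] := filter_ex (filterI (nbhs_right_gt (0%R : R)) near_ball).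
exists d => // w Sw.
have /choice [g gP] : forall i, exists x, S x /\ ball x d (w ord0 i).
  by move=> i; have [x Sx bx] := Sw i; exists x.
apply: (dO (\row_i g i)%R); first by move=> i; rewrite mxE; exact: (gP i).1.
by split => // i0 j; rewrite (ord1 i0) mxE; exact: (gP j).2.
Qed.

Section TubeCover.
Variables (X : set R) (F : set (set 'rV[R]_k)).
Hypothesis F_omega : Omega (power_set_rV X k) F.

Definition tube_cover : set (set R) :=
  [set V | [/\ relopen X V, ~ X `<=` V & exists2 U, F U & power_set_rV V k `<=` U]].

Lemma tube_cover_finite (S : set R) :
  finite_set S -> S `<=` X -> exists2 V, tube_cover V & S `<=` V.
Proof.
move=> finS SX; have [F_open [[_ _ F_notsub] F_fin]] := F_omega.
have [U [FU SU]] := F_fin _ (finite_power_set_rV finS) (power_set_rV_subset SX).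
have [W [W_open UE]] := F_open U FU.
have [d d0 dO] : exists2 d : R, (0 < d)%R &
    power_set_rV (\bigcup_(s in S) ball s d) k `<=` W.
  by apply: open_power_set_rV_thicken => // v /SU; rewrite UE => -[].
pose V := \bigcup_(s in S) ball s d `&` X.
have VU : power_set_rV V k `<=` U.
  rewrite UE => w Vw; split; first by apply: dO => i; exact: (Vw i).1.
  by move=> i; exact: (Vw i).2.
exists V; last by move=> x Sx; split; [exists x => //; exact: ballxx | exact: SX].
split.
- by exists (\bigcup_(s in S) ball s d); split => //; apply: bigcup_open => s _; exact: ball_open.
- by move=> XV; apply: (F_notsub _ FU); apply: subset_trans VU; exact: power_set_rV_subset.
- by exists U.
Qed.

Lemma Omega_tube_cover : Omega X tube_cover.
Proof.
split; first by move=> V [].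
split; first split.
- by move=> V [[W [_ ->]] _ _] x [].
- move=> x Xx; have [|V TV xV] := tube_cover_finite (finite_set1 x); first by move=> y ->.
  by exists V => //; apply: xV.
- by move=> V [].
- by move=> S finS SX; have [V TV SV] := tube_cover_finite finS SX; exists V.
Qed.

End TubeCover.

Definition coords (x : 'rV[R]_k) : seq R := [seq x ord0 i | i <- enum 'I_k].

Lemma mem_coords (x : 'rV[R]_k) (i : 'I_k) : x ord0 i \in coords x.
Proof. by apply: map_f; rewrite mem_enum. Qed.

Lemma coords_power_set_rV (X : set R) (x : 'rV[R]_k) :
  power_set_rV X k x -> forall t, t \in coords x -> X t.
Proof. by move=> Xx t /mapP [i _ ->]. Qed.

Lemma coords_neq0 (x : 'rV[R]_k) : (0 < k)%N -> coords x != [::].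
Proof. by move=> k_gt0; apply/eqP => cx; have := mem_coords x (Ordinal k_gt0); rewrite cx. Qed.

End PowerSets.

Section PowerTauStar.
Variables (R : realType) (X : set R) (k : nat).
Hypothesis k_gt0 : (0 < k)%N.
Local Notation A := (power_set_rV X k).
Variable F : set (set 'rV[R]_k).
Hypotheses (F_open : open_family A F) (F_cover : is_cover A F).
Variables (a : set nat) (e : nat -> set R) (q : R -> set nat).
Hypotheses (q_hcov : forall t, X t -> q t `<=` hcov a e t)
  (q_infinite : forall t, X t -> infinite_set (q t)) (q_linear : subset_star_linear X q).
Variable c : nat -> set 'rV[R]_k.
Hypotheses (c_F : forall n, a n -> F (c n))
  (e_c : forall n, a n -> power_set_rV (e n) k `<=` c n).
Variables (a' : set nat) (rho : nat -> nat).
Hypotheses (a'_sub : a' `<=` a) (c_inj : forall m n, a' m -> a' n -> c m = c n -> m = n)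
  (rho_rep : forall n, a n -> a' (rho n) /\ c (rho n) = c n).

Let meet (x : 'rV[R]_k) := \bigcap_(t in [set` coords x]) q t.
Let refinement (x : 'rV[R]_k) := rho @` meet x.

Lemma meet_index x n : A x -> meet x n -> a n.
Proof.
move=> Ax xn; have x0 := mem_coords x (Ordinal k_gt0).
by have [] := q_hcov (coords_power_set_rV Ax x0) (xn _ x0).
Qed.

Lemma meet_mem_c y n : A y -> a n -> (forall t, t \in coords y -> q t n) -> c n y.
Proof.
move=> Ay an yn; apply: (e_c an) => i; have yi := mem_coords y i.
by have [] := q_hcov (coords_power_set_rV Ay yi) (yn _ yi).
Qed.

Lemma refinement_hcov x : A x -> refinement x `<=` hcov a' c x.
Proof.
move=> Ax _ [n xn <-]; have an := meet_index Ax xn.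
have [a'n cn] := rho_rep an; split => //; rewrite cn; exact: meet_mem_c.
Qed.

Lemma refinement_linear : subset_star_linear A refinement.
Proof.
move=> x1 x2 Ax1 Ax2.
have := bigcap_seq_linear q_linear (conj (coords_neq0 x1 k_gt0) (coords_power_set_rV Ax1))
  (conj (coords_neq0 x2 k_gt0) (coords_power_set_rV Ax2)).
by case=> ?; [left|right]; exact: subset_star_image.
Qed.

Lemma refinement_infinite x : A x -> infinite_set (refinement x).
Proof.
(* If only finitely many U_m contain x, each misses a point p m; an index n
   common to all coordinates of x and of the p m puts every p m in U_n. *)
move=> Ax /finite_seqP [ms refE]; have [_ _ F_notsub] := F_cover.
have /choice [p pP] : forall m, exists y, m \in ms -> A y /\ ~ c m y.
  move=> m; have [mms|_] := boolP (m \in ms); last by exists 0%R.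
  have [n xn <-] : refinement x m by rewrite refE.
  have an := meet_index Ax xn.
  have /existsNP [y /not_implyP [Ay ncy]] := F_notsub _ (c_F an).
  by exists y; rewrite (rho_rep an).2.
pose s := coords x ++ flatten [seq coords (p m) | m <- ms].
have s_X t : t \in s -> X t.
  rewrite mem_cat => /orP [/(coords_power_set_rV Ax)//|/flatten_mapP [m mms]].
  move=> tp; exact: (coords_power_set_rV (pP m mms).1 tp).
have s0 : s != [::] by rewrite /s; case: (coords x) (coords_neq0 x k_gt0).
have [n sn] := infinite_setN0 (bigcap_seq_infinite q_linear q_infinite s0 s_X).
have xn : meet x n by move=> t tx; apply: sn; rewrite /= mem_cat tx.
have an := meet_index Ax xn.
have : refinement x (rho n) by exists n.
rewrite refE /= => rms; have [Ap ncp] := pP _ rms.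
apply: ncp; rewrite (rho_rep an).2; apply: meet_mem_c Ap an _ => t tp.
by apply: sn; rewrite /= mem_cat; apply/orP; right; apply/flatten_mapP; exists (rho n).
Qed.

Lemma Tstar_image : Tstar A (c @` a').
Proof.
have [F_sub _ F_notsub] := F_cover.
split; first by move=> _ [m a'm <-]; exact/F_open/c_F/a'_sub.
split.
  split.
  - by move=> _ [m a'm <-]; apply/F_sub/c_F/a'_sub.
  - move=> x Ax; have [m xm] := infinite_setN0 (refinement_infinite Ax).
    by have [a'm cmx] := refinement_hcov Ax xm; exists (c m) => //; exists m.
  - by move=> _ [m a'm <-]; apply/F_notsub/c_F/a'_sub.
exists a', c; split.
- by move=> n a'n; exists n.
- exact: c_inj.
- by move=> _ [n a'n <-]; exists n.
- move=> x Ax fin; exact: refinement_infinite Ax (sub_finite_set (refinement_hcov Ax) fin).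
- exact: linearly_refinable_image refinement_hcov refinement_infinite refinement_linear.
Qed.

End PowerTauStar.

Lemma Tstar_power_of_tube_cover (R : realType) (X : set R) (k : nat)
    (F : set (set 'rV[R]_k)) (G : set (set R)) :
  (0 < k)%N -> Omega (power_set_rV X k) F ->
  G `<=` tube_cover X F -> Tstar X G ->
  exists2 G', G' `<=` F & Tstar (power_set_rV X k) G'.
Proof.
move=> k_gt0 F_omega G_tube [_ [_ [a [e [a_G _ _ _ [r [rP r_linear]]]]]]].
have [F_open [F_cover _]] := F_omega.
have hY t : X t -> (hcov a e @` X) (hcov a e t) by exists t.
have /choice [c cP] : forall n, exists U, a n -> F U /\ power_set_rV (e n) k `<=` U.
  move=> n; have [an|nan] := pselect (a n); last by exists set0.
  by have [_ _ [U FU eU]] := G_tube _ (a_G n an); exists U.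
(* Distinct tubes may get the same member of F, but a tau^*-cover is
   enumerated injectively. *)
have [a' [rho [a'_sub c_inj rho_rep]]] := first_occurrence_reindex a c.
exists (c @` a'); first by move=> _ [m a'm <-]; exact: (cP m (a'_sub m a'm)).1.
apply: (Tstar_image k_gt0 F_open F_cover (q := r \o hcov a e)) c_inj rho_rep => //.
- by move=> t Xt; exact: (rP _ (hY t Xt)).1.
- by move=> t Xt; exact: (rP _ (hY t Xt)).2.
- by move=> t1 t2 X1 X2; exact: r_linear (hY t1 X1) (hY t2 X2).
- by move=> n an; exact: (cP n an).1.
- by move=> n an; exact: (cP n an).2.
Qed.

Theorem theorem8p2 (R : realType) (X : set R) :
  infinite_set X ->
  sel_Omega_Tstar X ->
  forall k : nat, (1 <= k)%N -> sel_Omega_Tstar (power_set_rV X k).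
Proof.
move=> _ X_sel k k_gt0 F F_omega.
have [G [G_tube G_Tstar]] := X_sel _ (Omega_tube_cover F_omega).
have [G' G'F G'_Tstar] := Tstar_power_of_tube_cover k_gt0 F_omega G_tube G_Tstar.
by exists G'.
Qed.
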